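(* Let $N \ge 2$, let $0 \le z_1 < \dots < z_N < 1$, let $\alpha_1,\dots,\alpha_N>0$ with $\sum_i \alpha_i = 1$, and let $\mu = \sum_{i=1}^N \alpha_i \delta_{z_i}$ on $[0,1]$. If $\lambda$ is an eigenvalue of the $\mu$-Laplacian $\Delta^\mu$, then $\lambda \in \mathbb R$ and $$2 \min_{i \in \{1,\dots,N\}} B_{i,i} \le \lambda \le 0,$$ where $B_{i,i} = -\alpha_{i-1}^{-2} - \alpha_i^{-2}$ with the convention $\alpha_0 := \alpha_N$.
   Context: $\delta_z$ is the Dirac measure at $z$. $L^2_\mu$ is the space of $\mu$-a.e. classes of real square-integrable functions on $[0,1]$ with inner product $\langle f,g\rangle_\mu = \sum_{i=1}^N \alpha_i f(z_i)g(z_i)$. $\mathscr D^1_\mu$ is the set of functions $f$ on $[0,1]$ for which there is $f' \in L^2_\mu$ with $f(0)=f(1)$ and $f(x) = f(0) + \int \mathbf 1_{[0,x)} f'\,d\mu$ for all $x\in[0,1]$ (with $[0,0)=\emptyset$); then $\nabla^\mu f := f'$, explicitly $\nabla^\mu f(z_n) = (f(z_{n+1})-f(z_n))/\alpha_n$ for $n<N$ and $\nabla^\mu f(z_N) = (f(z_1)-f(z_N))/\alpha_N$. Every class of $L^2_\mu$ has a representative in $\mathscr D^1_\mu$. The energy form is $\mathcal E(f,g) = \langle \nabla^\mu f, \nabla^\mu g\rangle_\mu$. A function $f \in \mathscr D^1_\mu$ belongs to $\mathscr D^2_\mu$ if there is $h \in L^2_\mu$ with $\mathcal E(f,g) = -\langle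 h, g\rangle_\mu$ for all $g\in\mathscr D^1_\mu$, and then $\Delta^\mu f := h$. Writing $A$ for the $N\times N$ matrix of $\nabla^\mu$ acting on $(f(z_1),\dots,f(z_N))^\top$ (so $A_{n,n} = -\alpha_n^{-1}$, $A_{n,n+1} = \alpha_n^{-1}$ for $n<N$, $A_{N,N} = -\alpha_N^{-1}$, $A_{N,1} = \alpha_N^{-1}$, other entries $0$), the paper takes $B := -A^\top A$ as matrix representation of $\Delta^\mu$; its diagonal entries are $B_{i,i} = -\alpha_{i-1}^{-2}-\alpha_i^{-2}$ (indices mod $N$). *)

From HB Require Import structures.
From mathcomp Require Import all_boot all_order all_algebra.
From mathcomp Require Import complex.
Set Implicit Arguments. Unset Strict Implicit. Unset Printing Implicit Defensive.
Import Order.TTheory GRing.Theory Num.Theory.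
Local Open Scope ring_scope.

(* Matrix A of the mu-gradient acting on (f(z_1),...,f(z_N))^T:
   A_{i,i} = -alpha_i^{-1}, A_{i,i+1 mod N} = alpha_i^{-1}, others 0
   (ordS i is the cyclic successor of i in 'I_N). *)
Definition grad_mx (R : fieldType) (N : nat) (alpha : 'I_N -> R) : 'M[R]_N :=
  \matrix_(i, j) (if j == i then - (alpha i)^-1
                  else if j == ordS i then (alpha i)^-1 else 0).

(* B := - A^T A, the paper's matrix representation of the mu-Laplacian. *)
Definition lap_mx (R : fieldType) (N : nat) (alpha : 'I_N -> R) : 'M[R]_N :=
  - ((grad_mx alpha)^T *m grad_mx alpha).

Definition is_eigenvalue (R : rcfType) (N : nat) (M : 'M[R]_N) (lam : R[i]) : Prop :=
  exists2 v : 'cV[R[i]]_N, v != 0 & map_mx (fun x => (x%:C)%C) M *m v = lam *: v.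

From mathcomp Require Import all_boot all_order all_algebra.
From mathcomp Require Import complex.
Set Implicit Arguments. Unset Strict Implicit. Unset Printing Implicit Defensive.
Import Order.TTheory GRing.Theory Num.Theory.
Local Open Scope ring_scope.

(* Writing A for the gradient matrix, B = - A^T A, so an eigenvector v of B
   satisfies lam |v|^2 = - |A v|^2: lam is real and nonpositive.  Every row of A
   has at most two nonzero entries, hence |(A v)_k|^2 <= 2 sum_j A_kj^2 |v_j|^2,
   and summing over k gives |A v|^2 <= 2 sum_j (- B_jj) |v_j|^2
   <= - 2 (min_j B_jj) |v|^2. *)

Lemma real_sqr_sum_le (C : numDomainType) (I : finType) (P : {pred I})
    (x : I -> C) : (forall i, x i \is Num.real) ->
  (\sum_(i in P) x i) ^+ 2 <= #|P|%:R * \sum_(i in P) x i ^+ 2.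
Proof.
move=> x_real.
have : 0 <= \sum_(i in P) \sum_(j in P) (x i - x j) ^+ 2.
  apply: sumr_ge0 => i _; apply: sumr_ge0 => j _.
  by rewrite -real_normK ?rpredB ?exprn_ge0.
have -> : \sum_(i in P) \sum_(j in P) (x i - x j) ^+ 2 =
    (#|P|%:R * \sum_(i in P) x i ^+ 2 - (\sum_(i in P) x i) ^+ 2) *+ 2.
  under eq_bigr => i _ do under eq_bigr => j _ do rewrite sqrrB.
  under eq_bigr => i _ do rewrite big_split /= sumrB sumr_const sumrMnl -mulr_sumr.
  rewrite !big_split /= sumrN !sumrMnl -mulr_suml sumr_const.
  by rewrite mulrnBl mulr_natl expr2 mulr2n addrAC.
by rewrite pmulrn_lge0 // subr_ge0.
Qed.

Lemma normr_sum_sqr_le (C : numDomainType) (I : finType) (P : {pred I})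
    (F : I -> C) :
  `|\sum_(i in P) F i| ^+ 2 <= #|P|%:R * \sum_(i in P) `|F i| ^+ 2.
Proof.
apply: le_trans (real_sqr_sum_le P (fun i => normr_real (F i))).
by rewrite lerXn2r ?nnegrE ?sumr_ge0 // ler_norm_sum.
Qed.

Section GramMatrix.
Variable C : numClosedFieldType.

Definition sqnorm n (v : 'cV[C]_n) : C := \sum_i `|v i 0| ^+ 2.

Lemma sqnorm_ge0 n (v : 'cV[C]_n) : 0 <= sqnorm v.
Proof. by apply: sumr_ge0 => i _; rewrite exprn_ge0. Qed.

Lemma sqnorm_eq0 n (v : 'cV[C]_n) : (sqnorm v == 0) = (v == 0).
Proof.
apply/idP/eqP => [|->]; last first.
  by rewrite /sqnorm big1 // => i _; rewrite mxE normr0 expr0n.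
rewrite psumr_eq0 => [/allP v0|i _]; last by rewrite exprn_ge0.
apply/matrixP => i j; rewrite ord1 mxE.
by have /(_ (mem_index_enum i)) := v0 i; rewrite sqrf_eq0 normr_eq0 => /eqP.
Qed.

Lemma conj_trmx_mul_sqnorm n (v : 'cV[C]_n) :
  (map_mx Num.conj v)^T *m v = (sqnorm v)%:M.
Proof.
apply/matrixP => i j; rewrite !ord1 !mxE /= mulr1n.
by apply: eq_bigr => k _; rewrite !mxE normCKC.
Qed.

Section RealGram.
Variables (m n : nat) (G : 'M[C]_(m, n)).
Hypothesis G_real : forall i j, G i j \is Num.real.

Lemma gram_eigenvalueE (lam : C) (v : 'cV_n) :
  v != 0 -> - (G^T *m G) *m v = lam *: v ->
  lam = - (sqnorm (G *m v) / sqnorm v).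
Proof.
move=> v_neq0 eig_v.
have conjG : map_mx Num.conj G = G.
  by apply/matrixP => i j; rewrite mxE conj_Creal.
have : (lam * sqnorm v)%:M = - (sqnorm (G *m v))%:M :> 'M_1.
  rewrite -scale_scalar_mx -!conj_trmx_mul_sqnorm scalemxAr -eig_v.
  by rewrite mulNmx mulmxN !mulmxA -trmx_mul map_mxM conjG.
move=> /matrixP /(_ 0 0); rewrite !mxE eqxx !mulr1n => lam_sqnorm.
by rewrite -mulNr -lam_sqnorm mulfK // sqnorm_eq0.
Qed.

Lemma gram_diagE j : (G^T *m G) j j = \sum_k `|G k j| ^+ 2.
Proof. by rewrite mxE; apply: eq_bigr => k _; rewrite mxE real_normK. Qed.

Lemma sqnorm_mulmx_le (c : nat) (v : 'cV_n) :
  (forall k, #|[set j | G k j != 0%R]| <= c)%N ->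
  sqnorm (G *m v) <= c%:R * \sum_j (G^T *m G) j j * `|v j 0| ^+ 2.
Proof.
move=> row_support.
under [X in _ <= _ * X]eq_bigr => j _ do rewrite gram_diagE mulr_suml.
rewrite exchange_big mulr_sumr; apply: ler_sum => k _; rewrite mxE.
set S := [set j | G k j != 0].
have sum_S (F : 'I_n -> C) :
    (forall j, G k j = 0 -> F j = 0) -> \sum_j F j = \sum_(j in S) F j.
  move=> F0; rewrite [RHS]big_mkcond; apply: eq_bigr => j _.
  by rewrite inE; case: eqP => // /F0.
rewrite sum_S => [|j ->]; last by rewrite mul0r.
apply: le_trans (normr_sum_sqr_le _ _) _.
rewrite [X in _ <= _ * X]sum_S => [|j ->]; last by rewrite normr0 expr0n mul0r.
under eq_bigr => j _ do rewrite normrM exprMn.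
rewrite ler_wpM2r ?ler_nat ?row_support //.
by apply: sumr_ge0 => j _; rewrite mulr_ge0 ?exprn_ge0.
Qed.

Lemma gram_eigenvalue_le0 (lam : C) (v : 'cV_n) :
  v != 0 -> - (G^T *m G) *m v = lam *: v -> lam <= 0.
Proof.
move=> v_neq0 eig_v; rewrite (gram_eigenvalueE v_neq0 eig_v) oppr_le0.
by rewrite divr_ge0 ?sqnorm_ge0.
Qed.

Lemma gram_eigenvalue_ge (c : nat) (b lam : C) (v : 'cV_n) :
  (forall k, #|[set j | G k j != 0%R]| <= c)%N ->
  (forall j, b <= (- (G^T *m G)) j j) ->
  v != 0 -> - (G^T *m G) *m v = lam *: v -> c%:R * b <= lam.
Proof.
move=> row_support b_le v_neq0 eig_v.
have sqnorm_gt0 : 0 < sqnorm v by rewrite lt_def sqnorm_eq0 v_neq0 sqnorm_ge0.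
rewrite (gram_eigenvalueE v_neq0 eig_v) lerNr ler_pdivrMr //.
apply: le_trans (sqnorm_mulmx_le v row_support) _.
rewrite mulNr -mulrA -mulrN ler_wpM2l ?ler0n // /sqnorm mulr_sumr -sumrN.
apply: ler_sum => j _; rewrite -mulNr ler_wpM2r ?exprn_ge0 //.
by rewrite lerNr; move: (b_le j); rewrite mxE.
Qed.

End RealGram.
End GramMatrix.

Lemma grad_mx_row_support (R : fieldType) n (alpha : 'I_n -> R) k :
  (#|[set j | grad_mx alpha k j != 0%R]| <= 2)%N.
Proof.
apply: leq_trans (subset_leq_card (B := [set k; ordS k]) _) _.
  apply/subsetP => j; rewrite !inE mxE.
  by case: (j == k) => //; case: (j == ordS k); rewrite ?eqxx.
by rewrite cards2; case: (_ != _).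
Qed.

Theorem proposition3p1 (R : rcfType) (n : nat)
    (z alpha : 'I_n.+2 -> R)
    (hz0 : forall i, 0 <= z i) (hz1 : forall i, z i < 1)
    (hzinc : forall i j : 'I_n.+2, (i < j)%N -> z i < z j)
    (halpha : forall i, 0 < alpha i)
    (hsum : \sum_(i < n.+2) alpha i = 1)
    (lam : R[i]) :
  is_eigenvalue (lap_mx alpha) lam ->
  exists r : R, lam = (r%:C)%C /\
    2 * \big[Num.min/lap_mx alpha ord0 ord0]_(i < n.+2) lap_mx alpha i i <= r
    /\ r <= 0.
Proof.
move=> [v v_neq0 eig_v].
set G := map_mx (real_complex R) (grad_mx alpha).
have lapE : map_mx (fun x => (x%:C)%C) (lap_mx alpha) = - (G^T *m G).
  by rewrite map_mxN map_mxM map_trmx.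
rewrite lapE in eig_v.
have G_real i j : G i j \is Num.real by rewrite mxE complex_real.
have G_support k : (#|[set j | G k j != 0%R]| <= 2)%N.
  apply: leq_trans (grad_mx_row_support alpha k); apply: subset_leq_card.
  by apply/subsetP => j; rewrite !inE mxE fmorph_eq0.
set b := \big[Num.min/_]_(i < n.+2) _.
have b_le j : (b%:C)%C <= (- (G^T *m G)) j j.
  by rewrite -lapE mxE lecR; exact: bigmin_le.
have lam_le0 := gram_eigenvalue_le0 G_real v_neq0 eig_v.
have lam_ge := gram_eigenvalue_ge G_real G_support b_le v_neq0 eig_v.
have /complex_realP [r lam_r] : lam \is Num.real by exact: ler0_real.
rewrite lam_r in lam_le0 lam_ge.
exists r; split => //; split; rewrite -lecR ?rmorphM ?rmorph_nat.
  exact: lam_ge.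
exact: lam_le0.
Qed.
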